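(* Let $\mathcal{H}_A,\mathcal{H}_B$ be finite-dimensional Hilbert spaces and $|\Psi\rangle\in\mathcal{H}_A\otimes\mathcal{H}_B$ a unit vector. For a unit vector $|\phi\rangle\in\mathcal{H}_A$ with $(\langle\phi|\otimes\mathbf{1})|\Psi\rangle\neq0$, its relative state is the normalization of $(\langle\phi|\otimes\mathbf{1})|\Psi\rangle\in\mathcal{H}_B$; for a unit vector $|\chi\rangle\in\mathcal{H}_B$ with $(\mathbf{1}\otimes\langle\chi|)|\Psi\rangle\neq0$, its relative state is the normalization of $(\mathbf{1}\otimes\langle\chi|)|\Psi\rangle\in\mathcal{H}_A$. Let $|\phi^{(1)}\rangle\in\mathcal{H}_A$ be a unit vector with $\langle\Psi|(|\phi^{(1)}\rangle\langle\phi^{(1)}|\otimes\mathbf{1})|\Psi\rangle>0$. Then the sequence defined by letting $|\chi^{(i)}\rangle$ be the relative state of $|\phi^{(i)}\rangle$ and $|\phi^{(i+1)}\rangle$ the relative state of $|\chi^{(i)}\rangle$ is well defined for all $i\geq1$, and for every $N\geq1$, $\langle\phi^{(1)}|\phi^{(N)}\rangle\neq0$. *)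

From HB Require Import structures.
From mathcomp Require Import all_boot all_order all_algebra.
From mathcomp Require Import reals.
From mathcomp Require Export complex.
Set Implicit Arguments. Unset Strict Implicit. Unset Printing Implicit Defensive.
Import Order.TTheory GRing.Theory Num.Theory.
Local Open Scope ring_scope.

Section RelState.
Variable C : numClosedFieldType.
Variables m n : nat.

Definition dotv k (u v : 'cV[C]_k) : C := \sum_(i < k) (u i 0)^* * v i 0.

Definition unit_vec k (v : 'cV[C]_k) : Prop := dotv v v = 1.

(* normalization v / ||v|| (equals 0 when v = 0) *)
Definition normalize k (v : 'cV[C]_k) : 'cV[C]_k := (sqrtC (dotv v v))^-1 *: v.

(* A vector |Psi> of H_A (x) H_B = C^m (x) C^n is represented by its
   coefficient matrix Psi i j = coefficient of e_i (x) f_j. *)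
Definition unit_state (Psi : 'M[C]_(m, n)) : Prop :=
  \sum_(i < m) \sum_(j < n) (Psi i j)^* * Psi i j = 1.

Definition contrA (Psi : 'M[C]_(m, n)) (phi : 'cV[C]_m) : 'cV[C]_n :=
  \col_(j < n) \sum_(i < m) (phi i 0)^* * Psi i j.

Definition contrB (Psi : 'M[C]_(m, n)) (chi : 'cV[C]_n) : 'cV[C]_m :=
  \col_(i < m) \sum_(j < n) (chi j 0)^* * Psi i j.

(* relative states (meaningful when the contraction is nonzero) *)
Definition relB Psi phi : 'cV[C]_n := normalize (contrA Psi phi).
Definition relA Psi chi : 'cV[C]_m := normalize (contrB Psi chi).

Definition expect_proj (Psi : 'M[C]_(m, n)) (phi : 'cV[C]_m) : C :=
  \sum_(j < n) \sum_(i < m) \sum_(i' < m)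
     (Psi i j)^* * (phi i 0 * (phi i' 0)^*) * Psi i' j.

(* phi_seq Psi phi1 k = |phi^(k+1)>,  chi_seq Psi phi1 k = |chi^(k+1)> *)
Fixpoint phi_seq (Psi : 'M[C]_(m, n)) (phi1 : 'cV[C]_m) (k : nat) : 'cV[C]_m :=
  match k with
  | 0 => phi1
  | k'.+1 => relA Psi (relB Psi (phi_seq Psi phi1 k'))
  end.

Definition chi_seq Psi phi1 k : 'cV[C]_n := relB Psi (phi_seq Psi phi1 k).

End RelState.

(* Let a := (<phi| (x) 1)|Psi> and b := (1 (x) <chi|)|Psi>.  The two contractions are
   adjoint to each other, <b(chi)|phi> = <a(phi)|chi>, and normalization only scales by
   positive reals.  Hence for phi' := relA (relB psi) both <phi|phi'> and <phi'|psi>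
   are positive multiples of the same number <a(psi)|a(phi)>, so the sign of
   <phi^(k)|phi^(l)> is constant along anti-diagonals k + l = const.  Every
   anti-diagonal meets either <phi^(k)|phi^(k)> = 1 or
   <phi^(k)|phi^(k+1)>, a positive multiple of |a(phi^(k))|^2; so all these inner
   products, in particular <phi^(1)|phi^(N)>, are positive. *)
From HB Require Import structures.
From mathcomp Require Import all_boot all_order all_algebra.
From mathcomp Require Import reals complex.
Import Order.TTheory GRing.Theory Num.Theory.
Set Implicit Arguments. Unset Strict Implicit.
Local Open Scope ring_scope.

Section InnerProduct.
Variables (C : numClosedFieldType) (k : nat).
Implicit Types (u v : 'cV[C]_k) (a : C).

Lemma dotvZl a u v : dotv (a *: u) v = a^* * dotv u v.
Proof. by rewrite /dotv mulr_sumr; apply: eq_bigr => i _; rewrite mxE rmorphM mulrA. Qed.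

Lemma dotvZr a u v : dotv u (a *: v) = a * dotv u v.
Proof. by rewrite /dotv mulr_sumr; apply: eq_bigr => i _; rewrite mxE mulrCA. Qed.

Lemma dotvC u v : dotv u v = (dotv v u)^*.
Proof.
rewrite /dotv rmorph_sum; apply: eq_bigr => i _.
by rewrite rmorphM /= conjCK mulrC.
Qed.

Lemma dotv0l v : dotv 0 v = 0.
Proof. by rewrite /dotv big1 // => i _; rewrite mxE conjC0 mul0r. Qed.

Lemma dotv_ge0 v : 0 <= dotv v v.
Proof. by apply: sumr_ge0 => i _; rewrite mulrC mul_conjC_ge0. Qed.

Lemma dotv_gt0 v : v != 0 -> 0 < dotv v v.
Proof.
move=> v_neq0; rewrite lt_def dotv_ge0 andbT; apply: contra v_neq0.
rewrite psumr_eq0 => [/allP v0|i _]; last by rewrite mulrC mul_conjC_ge0.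
apply/eqP/matrixP => i j; rewrite (ord1 j) mxE; apply/eqP.
by rewrite -mul_conjC_eq0 mulrC (implyP (v0 i _)) ?mem_index_enum.
Qed.

Definition invnorm v : C := (sqrtC (dotv v v))^-1.

Lemma normalizeE v : normalize v = invnorm v *: v. Proof. by []. Qed.

Lemma invnorm_ge0 v : 0 <= invnorm v.
Proof. by rewrite invr_ge0 sqrtC_ge0 dotv_ge0. Qed.

Lemma invnorm_gt0 v : v != 0 -> 0 < invnorm v.
Proof. by move=> v_neq0; rewrite invr_gt0 sqrtC_gt0 dotv_gt0. Qed.

Lemma normalize_unit v : v != 0 -> unit_vec (normalize v).
Proof.
move=> v_neq0; rewrite /unit_vec normalizeE dotvZl dotvZr.
rewrite geC0_conj ?invnorm_ge0 // mulrA -expr2 /invnorm exprVn sqrtCK.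
by rewrite mulVf // gt_eqF ?dotv_gt0.
Qed.

End InnerProduct.

Section Contractions.
Variables (C : numClosedFieldType) (m n : nat) (Psi : 'M[C]_(m, n)).
Implicit Types (phi psi : 'cV[C]_m) (chi : 'cV[C]_n).

Lemma dotv_contrBA chi phi :
  dotv (contrB Psi chi) phi = dotv (contrA Psi phi) chi.
Proof.
rewrite /dotv.
under eq_bigr do rewrite mxE rmorph_sum big_distrl /=.
under [RHS]eq_bigr do rewrite mxE rmorph_sum big_distrl /=.
rewrite exchange_big; apply: eq_bigr => j _; apply: eq_bigr => i _.
by rewrite !rmorphM /= !conjCK [LHS]mulrC [chi j 0 * _]mulrC mulrA.
Qed.

Lemma expect_projE phi :
  expect_proj Psi phi = dotv (contrA Psi phi) (contrA Psi phi).
Proof.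
rewrite /expect_proj /dotv; apply: eq_bigr => j _.
rewrite !mxE rmorph_sum big_distrl /=; apply: eq_bigr => i _.
rewrite big_distrr /=; apply: eq_bigr => i' _.
by rewrite rmorphM /= conjCK mulrCA !mulrA.
Qed.

Lemma dotv_contrB_relB phi :
  dotv (contrB Psi (relB Psi phi)) phi
  = invnorm (contrA Psi phi) * dotv (contrA Psi phi) (contrA Psi phi).
Proof. by rewrite dotv_contrBA /relB normalizeE dotvZr. Qed.

Lemma dotv_contrA_relA chi :
  dotv (contrA Psi (relA Psi chi)) chi
  = invnorm (contrB Psi chi) * dotv (contrB Psi chi) (contrB Psi chi).
Proof. by rewrite -dotv_contrBA /relA normalizeE dotvZr. Qed.

Lemma contrB_relB_neq0 phi :
  contrA Psi phi != 0 -> contrB Psi (relB Psi phi) != 0.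
Proof.
move=> a_neq0; apply/eqP => contr0; move: (dotv_contrB_relB phi).
by rewrite contr0 dotv0l => /esym/eqP; rewrite mulf_eq0 !gt_eqF ?invnorm_gt0 ?dotv_gt0.
Qed.

Lemma contrA_relA_neq0 chi :
  contrB Psi chi != 0 -> contrA Psi (relA Psi chi) != 0.
Proof.
move=> b_neq0; apply/eqP => contr0; move: (dotv_contrA_relA chi).
by rewrite contr0 dotv0l => /esym/eqP; rewrite mulf_eq0 !gt_eqF ?invnorm_gt0 ?dotv_gt0.
Qed.

Definition relAB phi := relA Psi (relB Psi phi).

Definition relAB_coef phi : C :=
  invnorm (contrB Psi (relB Psi phi)) * invnorm (contrA Psi phi).

Lemma relAB_coef_gt0 phi : contrA Psi phi != 0 -> 0 < relAB_coef phi.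
Proof. by move=> a_neq0; rewrite mulr_gt0 ?invnorm_gt0 ?contrB_relB_neq0. Qed.

Lemma dotv_relABr phi psi :
  dotv phi (relAB psi)
  = relAB_coef psi * dotv (contrA Psi psi) (contrA Psi phi).
Proof.
rewrite /relAB {1}/relA normalizeE dotvZr dotvC dotv_contrBA /relB normalizeE.
by rewrite dotvZr rmorphM /= geC0_conj ?invnorm_ge0 // -dotvC mulrA.
Qed.

Lemma dotv_relABl phi psi :
  dotv (relAB phi) psi
  = relAB_coef phi * dotv (contrA Psi psi) (contrA Psi phi).
Proof.
rewrite /relAB {1}/relA normalizeE dotvZl geC0_conj ?invnorm_ge0 //.
by rewrite dotv_contrBA /relB normalizeE dotvZr mulrA.
Qed.

Lemma dotv_relAB_gt0_shift phi psi :
    contrA Psi phi != 0 -> contrA Psi psi != 0 ->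
  (0 < dotv phi (relAB psi)) = (0 < dotv (relAB phi) psi).
Proof.
move=> a_phi a_psi.
rewrite dotv_relABr dotv_relABl (pmulr_rgt0 _ (relAB_coef_gt0 a_psi)).
by rewrite (pmulr_rgt0 _ (relAB_coef_gt0 a_phi)).
Qed.

Lemma dotv_relAB_gt0 phi : contrA Psi phi != 0 -> 0 < dotv phi (relAB phi).
Proof. by move=> a_neq0; rewrite dotv_relABr mulr_gt0 ?relAB_coef_gt0 ?dotv_gt0. Qed.

End Contractions.

Section RelativeStateSequence.
Variables (C : numClosedFieldType) (m n : nat) (Psi : 'M[C]_(m, n)).
Variable phi1 : 'cV[C]_m.
Hypothesis contrA_phi1_neq0 : contrA Psi phi1 != 0.

Local Notation ph := (phi_seq Psi phi1).

Lemma phi_seqS k : ph k.+1 = relAB Psi (ph k). Proof. by []. Qed.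

Lemma contrA_phi_seq_neq0 k : contrA Psi (ph k) != 0.
Proof.
by elim: k => // k IHk; rewrite phi_seqS contrA_relA_neq0 ?contrB_relB_neq0.
Qed.

Lemma contrB_chi_seq_neq0 k : contrB Psi (chi_seq Psi phi1 k) != 0.
Proof. exact/contrB_relB_neq0/contrA_phi_seq_neq0. Qed.

Hypothesis phi1_unit : unit_vec phi1.

Lemma phi_seq_unit k : unit_vec (ph k).
Proof. by case: k => // k; apply/normalize_unit/contrB_chi_seq_neq0. Qed.

Lemma dotv_phi_seq_gt0 d k : 0 < dotv (ph k) (ph (k + d)).
Proof.
elim/ltn_ind: d k => -[|[|d]] IHd k.
- by rewrite addn0 phi_seq_unit ltr01.
- by rewrite addn1 phi_seqS dotv_relAB_gt0 ?contrA_phi_seq_neq0.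
rewrite !addnS phi_seqS dotv_relAB_gt0_shift ?contrA_phi_seq_neq0 //.
exact: (IHd d (leqnSn _) k.+1).
Qed.

End RelativeStateSequence.

Local Open Scope complex_scope.

Theorem mainTheorem9 (R : realType) (m n : nat)
    (Psi : 'M[R[i]]_(m, n)) (phi1 : 'cV[R[i]]_m) :
  unit_state Psi -> unit_vec phi1 -> 0 < expect_proj Psi phi1 ->
  (forall k : nat,
      contrA Psi (phi_seq Psi phi1 k) != 0 /\
      contrB Psi (chi_seq Psi phi1 k) != 0) /\
  (forall k : nat, dotv phi1 (phi_seq Psi phi1 k) != 0).
Proof.
move=> _ phi1_unit expect_gt0.
have a_phi1 : contrA Psi phi1 != 0.
  by apply: contraTneq expect_gt0; rewrite expect_projE => ->; rewrite dotv0l ltxx.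
split=> k; first by rewrite contrA_phi_seq_neq0 ?contrB_chi_seq_neq0.
by rewrite gt_eqF // (dotv_phi_seq_gt0 a_phi1 phi1_unit k 0).
Qed.
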